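(* Let $c\ge2$, $1\le d\le c-1$ an integer, and $\Gamma$ a $c$-uniform unoriented hypergraph with $E\ne\varnothing$ and no isolated vertices, with smallest normalized Laplacian eigenvalue $\lambda_1$ and $d$-proper coloring number $\chi_d$. If $\chi_d=\dfrac{c-\lambda_1}{d-\lambda_1}$, then for every $d$-proper $\chi_d$-coloring with color classes $V_1,\dots,V_{\chi_d}$: (1) $|e\cap V_i|\in\{0,d\}$ for every $e\in E$ and every $i$; (2) for all distinct $i,j$, the function $g_{ij}$ is an eigenfunction of $L$ with eigenvalue $\lambda_1=\dfrac{d\chi_d-c}{\chi_d-1}$; (3) for all distinct $i,j$ and all $v\in V_i$, $\bigl|\{e\in E: v\in e,\ e\cap V_j\neq\varnothing\}\bigr|=\dfrac{\deg v\,(c/d-1)}{\chi_d-1}$. Moreover, without assuming equality: for any $d$-proper $\chi_d$-coloring satisfying (1), the functions $g_{ij}$ ($i\neq j$) are all eigenfunctions of $L$ (necessarily with eigenvalue $(d\chi_d-c)/(\chi_d-1)$) if and only if (3) holds.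
   Context: A hypergraph has finite vertex set $V$ and edge set $E\subseteq\mathcal P(V)$; it is $c$-uniform if $|e|=c$ for all $e$, and unoriented means all incidences have orientation $+1$. $\deg v=|\{e\in E: v\in e\}|\ge1$, $D=\mathrm{diag}(\deg v)$, adjacency $A_{v,v}=0$ and $A_{v,w}=-|\{e\in E: v,w\in e\}|$ for $v\ne w$, normalized Laplacian $L=\mathrm{Id}-D^{-1}A$ with eigenvalues $\lambda_1\le\dots\le\lambda_N$. A $k$-coloring $V\to\{1,\dots,k\}$ is $d$-proper if every edge contains at most $d$ vertices of each color; $\chi_d$ is the least $k$ admitting one (here $\chi_d\ge2$). Given color classes $V_1,\dots,V_k$ and distinct $i,j$, $g_{ij}(w)=1$ if $w\in V_i$, $-1$ if $w\in V_j$, $0$ otherwise. *)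

From HB Require Import structures.
From mathcomp Require Import all_boot all_order all_algebra.
From mathcomp Require Import reals.
Set Implicit Arguments. Unset Strict Implicit. Unset Printing Implicit Defensive.
Import Order.TTheory GRing.Theory Num.Theory.
Local Open Scope ring_scope.

Section Hyper.
Variables (V : finType) (E : {set {set V}}).

Definition uniform (c : nat) : Prop := forall e, e \in E -> #|e| = c.

Definition hdeg (v : V) : nat := #|[set e in E | v \in e]|.

Definition no_isolated : Prop := forall v : V, (1 <= hdeg v)%N.

Variable R : realType.

Definition hadj (v w : V) : R :=
  if v == w then 0 else - (#|[set e in E | (v \in e) && (w \in e)]|)%:R.

Definition hlap (f : V -> R) (v : V) : R :=
  f v - (hdeg v)%:R^-1 * \sum_(w : V) hadj v w * f w.

Definition eigenfun (f : V -> R) (mu : R) : Prop :=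
  (exists v, f v != 0) /\ forall v, hlap f v = mu * f v.

Definition is_eigval (mu : R) : Prop := exists f, eigenfun f mu.

Definition smallest_eigval (lam1 : R) : Prop :=
  is_eigval lam1 /\ forall mu, is_eigval mu -> lam1 <= mu.

Definition dproper (d k : nat) (col : V -> 'I_k) : Prop :=
  forall e, e \in E -> forall i : 'I_k, (#|[set v in e | col v == i]| <= d)%N.

Definition is_chi (d chi : nat) : Prop :=
  (exists col : V -> 'I_chi, dproper d col) /\
  forall k, (k < chi)%N -> ~ exists col : V -> 'I_k, dproper d col.

Definition cclass k (col : V -> 'I_k) (i : 'I_k) : {set V} :=
  [set v | col v == i].

Definition gfun k (col : V -> 'I_k) (i j : 'I_k) (w : V) : R :=
  if col w == i then 1 else if col w == j then -1 else 0.

Definition cond1 (d k : nat) (col : V -> 'I_k) : Prop :=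
  forall e, e \in E -> forall i : 'I_k,
    #|e :&: cclass col i| = 0%N \/ #|e :&: cclass col i| = d.

Definition cond3 (c d k : nat) (col : V -> 'I_k) : Prop :=
  forall i j : 'I_k, i != j -> forall v, v \in cclass col i ->
    (#|[set e in E | (v \in e) && (e :&: cclass col j != set0)]|)%:R
      = (hdeg v)%:R * ((c%:R / d%:R - 1) / (k%:R - 1)) :> R.

End Hyper.

(* With [N f = \sum_e (\sum_(u in e) f u)^2] and [D f = \sum_v deg v * f v^2],
   one has [<f, D L f> = N f], so [lam1 * D f <= N f] for every [f] (a minimiser
   of [N] on the sphere [D f = 1] is an eigenfunction), and equality forces [f] to
   be an eigenfunction for [lam1].  For a d-proper chi-colouring, summing
   [N - lam1 D] over all differences [1_(V_i) - 1_(V_j)] gives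
   [2 chi \sum_e \sum_i a_i (a_i - d)] with [a_i = |e :&: V_i|], as soon as
   [lam1 (chi - 1) = d chi - c]; this is [<= 0], so every term vanishes, which is
   (1) and (2).  Under (1), [deg v * L g_ij v = d (n_i v - n_j v)] where [n_j v]
   counts the edges at [v] meeting [V_j], and [d \sum_j n_j v = c deg v]; hence the
   [g_ij] are all eigenfunctions iff the [n_j v] with [j <> col v] coincide, which
   is (3). *)

From HB Require Import structures.
From mathcomp Require Import all_boot all_order all_algebra.
From mathcomp Require Import reals.
From mathcomp Require boolp classical_sets topology normedtype derive.
From mathcomp Require Import ring lra zify.
Set Implicit Arguments. Unset Strict Implicit. Unset Printing Implicit Defensive.
Import Order.TTheory GRing.Theory Num.Theory.
Local Open Scope ring_scope.

Lemma natr_card_sep (R : numDomainType) (T : finType) (A : {set T}) (P : pred T) :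
  (#|[set x in A | P x]|)%:R = \sum_(x in A) (P x)%:R :> R.
Proof.
rewrite -natr_sum -sum1_card; congr _%:R; rewrite big_mkcond [RHS]big_mkcond /=.
by apply: eq_bigr => x _; rewrite !inE; case: (x \in A); case: (P x).
Qed.

Lemma sum_sqr_sub (R : comNzRingType) k (y : 'I_k -> R) :
  \sum_i \sum_j (y i - y j) ^+ 2 = 2 * k%:R * \sum_i y i ^+ 2 - 2 * (\sum_i y i) ^+ 2.
Proof.
transitivity (\sum_i (k%:R * y i ^+ 2 - 2 * y i * \sum_j y j + \sum_j y j ^+ 2)).
  apply: eq_bigr => i _.
  transitivity (\sum_j (y i ^+ 2 - 2 * y i * y j + y j ^+ 2)).
    by apply: eq_bigr => j _; ring.
  by rewrite !big_split /= sumrN sumr_const card_ord -mulr_sumr; ring.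
rewrite big_split /= big_split /= sumrN sumr_const card_ord -mulr_suml -!mulr_sumr.
ring.
Qed.

Lemma quadratic_ge0_linear_eq0 (R : realFieldType) (b q : R) :
  (forall t, 0 <= 2 * t * b + t ^+ 2 * q) -> b = 0.
Proof.
move=> ge0; apply/eqP; rewrite -sqrf_eq0 eq_le sqr_ge0 andbT.
have [q_le0|q_gt0] := lerP q 0.
  have := ge0 (- b); have := mulr_ge0_le0 (sqr_ge0 b) q_le0; lra.
have := ge0 (- b / q).
have -> : 2 * (- b / q) * b + (- b / q) ^+ 2 * q = - (b ^+ 2 / q) by field; rewrite gt_eqF.
by rewrite oppr_ge0 pmulr_lle0 // invr_gt0.
Qed.

Lemma nsumr_eq0P (R : numDomainType) (I : finType) (P : pred I) (F : I -> R) :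
  (forall i, P i -> F i <= 0) -> \sum_(i | P i) F i = 0 -> forall i, P i -> F i = 0.
Proof.
move=> F_le0 sum0 i Pi; apply/eqP; rewrite -oppr_eq0; apply/eqP; move: i Pi.
by apply: psumr_eq0P => [i /F_le0|]; rewrite ?oppr_ge0 // sumrN sum0 oppr0.
Qed.

Section Continuity.
Import boolp classical_sets topology normedtype numFieldNormedType.Exports.

Lemma continuous_sum (R : realType) (T : topologicalType) (I : Type) (r : seq I)
    (P : pred I) (F : I -> T -> R) :
  (forall i, continuous (F i)) -> continuous (fun x => \sum_(i <- r | P i) F i x).
Proof.
move=> cF; elim: r => [|i r IH].
  under eq_fun do rewrite big_nil; exact: cst_continuous.
under eq_fun do rewrite big_cons.
by case: (P i) => // x; apply: continuousD; [exact: cF | exact: IH].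
Qed.

Lemma continuous_mul (R : realType) (T : topologicalType) (f g : T -> R) :
  continuous f -> continuous g -> continuous (fun x => f x * g x).
Proof. by move=> cf cg x; exact: (continuousM (cf x) (cg x)). Qed.

End Continuity.

Section Rayleigh.
Variables (R : realType) (V : finType) (E : {set {set V}}).

Definition edge_sum (f : V -> R) (e : {set V}) : R := \sum_(u in e) f u.
Definition hdegr (v : V) : R := (hdeg E v)%:R.

(* [D L f], cf. [deglapE]. *)
Definition deglap (f : V -> R) (v : V) : R := \sum_(e in E) (v \in e)%:R * edge_sum f e.

Definition rnum (f : V -> R) : R := \sum_(e in E) edge_sum f e ^+ 2.
Definition rden (f : V -> R) : R := \sum_v hdegr v * f v ^+ 2.
Definition rgap (mu : R) (f : V -> R) : R := rnum f - mu * rden f.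

Lemma hdegrE v : hdegr v = \sum_(e in E) (v \in e)%:R.
Proof. exact: natr_card_sep. Qed.

Lemma sum_incident (F : V -> {set V} -> R) :
  \sum_v \sum_(e in E) (v \in e)%:R * F v e = \sum_(e in E) \sum_(u in e) F u e.
Proof.
rewrite exchange_big /=; apply: eq_bigr => e _; rewrite [RHS]big_mkcond /=.
by apply: eq_bigr => u _; case: (u \in e); rewrite ?mul1r ?mul0r.
Qed.

Lemma sum_hdegr (F : V -> R) : \sum_v hdegr v * F v = \sum_(e in E) \sum_(u in e) F u.
Proof.
rewrite -sum_incident; apply: eq_bigr => v _.
by rewrite hdegrE mulr_suml.
Qed.

Lemma sum_mul_deglap f h :
  \sum_v h v * deglap f v = \sum_(e in E) edge_sum f e * edge_sum h e.
Proof.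
transitivity (\sum_(e in E) \sum_(u in e) edge_sum f e * h u).
  rewrite -sum_incident; apply: eq_bigr => v _; rewrite /deglap mulr_sumr.
  by apply: eq_bigr => e _; ring.
by apply: eq_bigr => e _; rewrite [in RHS]/edge_sum mulr_sumr.
Qed.

Lemma deglapE f v : hdegr v * f v - \sum_w hadj E R v w * f w = deglap f v.
Proof.
have -> : deglap f v = \sum_w (#|[set e in E | (v \in e) && (w \in e)]|)%:R * f w.
  rewrite /deglap /edge_sum.
  under eq_bigr do rewrite mulr_sumr (big_mkcond (fun u => u \in _)).
  rewrite exchange_big /=; apply: eq_bigr => w _.
  rewrite natr_card_sep mulr_suml; apply: eq_bigr => e _ /=.
  by case: (v \in e); case: (w \in e); rewrite ?mul1r ?mul0r ?mulr0.
rewrite (bigD1 v) //= [RHS](bigD1 v) //= /hadj eqxx mul0r add0r.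
have -> : [set e in E | (v \in e) && (v \in e)] = [set e in E | v \in e].
  by apply/setP => e; rewrite !inE andbb.
congr (_ + _); rewrite -sumrN; apply: eq_bigr => w.
by rewrite eq_sym => /negbTE ->; rewrite mulNr opprK.
Qed.

Lemma rdenE f : rden f = \sum_(e in E) \sum_(u in e) f u ^+ 2.
Proof. exact: sum_hdegr. Qed.

Lemma rgapE mu f :
  rgap mu f = \sum_(e in E) (edge_sum f e ^+ 2 - mu * \sum_(u in e) f u ^+ 2).
Proof. by rewrite /rgap rdenE sumrB mulr_sumr. Qed.

Lemma rgap_line mu f h t :
  rgap mu (fun u => f u + t * h u) = rgap mu f
    + 2 * t * (\sum_v h v * (deglap f v - mu * hdegr v * f v)) + t ^+ 2 * rgap mu h.
Proof.
have -> : \sum_v h v * (deglap f v - mu * hdegr v * f v) =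
    \sum_v h v * deglap f v - mu * \sum_v hdegr v * (f v * h v).
  by rewrite mulr_sumr -sumrB; apply: eq_bigr => v _; ring.
rewrite sum_mul_deglap sum_hdegr !rgapE [mu * _]mulr_sumr -sumrB.
rewrite [2 * t * _]mulr_sumr [t ^+ 2 * _]mulr_sumr -!big_split /=.
apply: eq_bigr => e _.
have -> : edge_sum (fun u => f u + t * h u) e = edge_sum f e + t * edge_sum h e.
  by rewrite /edge_sum big_split /= mulr_sumr.
have -> : \sum_(u in e) (f u + t * h u) ^+ 2 = \sum_(u in e) f u ^+ 2
    + 2 * t * \sum_(u in e) f u * h u + t ^+ 2 * \sum_(u in e) h u ^+ 2.
  by rewrite !mulr_sumr -!big_split /=; apply: eq_bigr => u _; ring.
ring.
Qed.

Lemma rden_ge0 f : 0 <= rden f.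
Proof. by rewrite rdenE; apply: sumr_ge0 => e _; apply: sumr_ge0 => u _; apply: sqr_ge0. Qed.

Lemma rnum_ge0 f : 0 <= rnum f.
Proof. by apply: sumr_ge0 => e _; apply: sqr_ge0. Qed.

Lemma rdenZ a f : rden (fun u => a * f u) = a ^+ 2 * rden f.
Proof. by rewrite /rden mulr_sumr; apply: eq_bigr => v _; ring. Qed.

Lemma rnumZ a f : rnum (fun u => a * f u) = a ^+ 2 * rnum f.
Proof. by rewrite /rnum mulr_sumr; apply: eq_bigr => e _; rewrite /edge_sum -mulr_sumr; ring. Qed.

Hypothesis noiso : no_isolated E.

Lemma hdegr_ge1 v : 1 <= hdegr v.
Proof. by rewrite ler1n; apply: noiso. Qed.

Lemma hdegr_neq0 v : hdegr v != 0.
Proof. by rewrite gt_eqF // (lt_le_trans ltr01) ?hdegr_ge1. Qed.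

Lemma hlapE f v : hlap E f v = (hdegr v)^-1 * deglap f v.
Proof. by rewrite -deglapE /hlap mulrBr mulKf ?hdegr_neq0. Qed.

(* First variation of [rgap mu] at [f] along the indicator of [v]. *)
Lemma eigen_of_rgap_min mu f :
  (forall g, 0 <= rgap mu g) -> rgap mu f = 0 -> forall v, hlap E f v = mu * f v.
Proof.
move=> gap_ge0 gap0 v.
pose h u : R := (u == v)%:R.
have : \sum_w h w * (deglap f w - mu * hdegr w * f w) = 0.
  apply: (quadratic_ge0_linear_eq0 (q := rgap mu h)) => t.
  by have := gap_ge0 (fun u => f u + t * h u); rewrite rgap_line gap0 add0r.
rewrite (bigD1 v) //= big1 => [|w /negbTE w_v]; last by rewrite /h w_v mul0r.
rewrite /h eqxx mul1r addr0 => /eqP; rewrite subr_eq0 => /eqP deglap_v.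
by rewrite hlapE deglap_v; field; apply: hdegr_neq0.
Qed.

Import boolp classical_sets topology normedtype derive numFieldNormedType.Exports.

(* The weighted sphere [rden f = 1] is compact since [hdegr >= 1] bounds every
   coordinate by 1. *)
Lemma rnum_min_on_sphere (v0 : V) :
  exists2 f0, rden f0 = 1 & forall f, rden f = 1 -> rnum f0 <= rnum f.
Proof.
pose n := #|V|.
pose fx (x : 'rV[R]_n) (v : V) : R := x ord0 (enum_rank v).
pose rx (f : V -> R) : 'rV[R]_n := \row_i f (enum_val i).
have fxK f : fx (rx f) = f by apply: funext => v; rewrite /fx /rx mxE enum_rankK.
have cfx v : continuous (fx^~ v) by move=> x; apply: coord_continuous.
have cden : continuous (fun x => rden (fx x)).
  apply: continuous_sum => v; apply: continuous_mul; first exact: cst_continuous.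
  exact: continuous_mul.
have cnum : continuous (fun x => rnum (fx x)).
  by apply: continuous_sum => e; apply: continuous_mul; apply: continuous_sum.
pose S := [set x : 'rV[R]_n | rden (fx x) = 1]%classic.
have S0 : (S !=set0)%classic.
  exists (rx (fun v => if v == v0 then Num.sqrt (hdegr v0)^-1 else 0)).
  rewrite /S /= fxK /rden (bigD1 v0) //= eqxx big1 => [|v /negbTE ->]; last first.
    by rewrite expr0n mulr0.
  rewrite addr0 sqr_sqrtr ?invr_ge0 ?(le_trans ler01 (hdegr_ge1 v0)) //.
  by rewrite mulfV ?hdegr_neq0.
have cS : compact S.
  have cube : compact [set x : 'rV[R]_n | forall i, `[(-1 : R), 1] (x ord0 i)]%classic.
    exact: (rV_compact (fun=> @segment_compact R (-1) 1)).
  apply: (subclosed_compact _ cube).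
    exact: (proj1 (continuous_closedP _) cden _ (@closed_eq R 1)).
  move=> x Sx i /=; rewrite in_itv /= -ler_norml.
  have -> : x ord0 i = fx x (enum_val i) by rewrite /fx enum_valK.
  rewrite -(expr_le1 (n := 2)) // real_normK ?num_real //.
  apply: le_trans (_ : hdegr (enum_val i) * fx x (enum_val i) ^+ 2 <= 1).
    by rewrite ler_peMl ?sqr_ge0 ?hdegr_ge1.
  rewrite -Sx /rden (bigD1 (enum_val i)) //= lerDl.
  by apply: sumr_ge0 => v _; rewrite mulr_ge0 ?sqr_ge0 ?(le_trans ler01 (hdegr_ge1 v)).
have [x Sx x_min] := compact_EVT_min S0 cS (continuous_subspaceT cnum).
exists (fx x) => [|f f1]; first by rewrite inE in Sx.
by have := x_min (rx f); rewrite fxK; apply; rewrite inE /S /= fxK.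
Qed.

Lemma rgap_smallest_eigval_ge0 lam1 f : smallest_eigval E lam1 -> 0 <= rgap lam1 f.
Proof.
move=> [[_ [[v0 _] _]] lam1_min].
have [f0 f0_1 f0_min] := rnum_min_on_sphere v0.
set mu := rnum f0.
have gap_ge0 g : 0 <= rgap mu g.
  rewrite subr_ge0; have := rden_ge0 g; rewrite le_eqVlt => /orP[/eqP <-|g_pos].
    by rewrite mulr0 rnum_ge0.
  pose a := (Num.sqrt (rden g))^-1.
  have a2g : a ^+ 2 * rden g = 1 by rewrite exprVn sqr_sqrtr ?mulVf ?gt_eqF ?ltW.
  have := f0_min (fun u => a * g u); rewrite rdenZ rnumZ -/mu => /(_ a2g) mu_le.
  by rewrite -[rnum g]mul1r -a2g mulrAC ler_pM2r.
have mu_eig : is_eigval E mu.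
  exists f0; split; last by apply: eigen_of_rgap_min; rewrite // /rgap f0_1 mulr1 subrr.
  apply/existsP; apply: contraT; rewrite negb_exists => /forallP f0_0.
  move: f0_1; rewrite /rden big1 => [/eqP|v _]; first by rewrite eq_sym oner_eq0.
  by move: (f0_0 v); rewrite negbK => /eqP ->; rewrite expr0n mulr0.
have := gap_ge0 f; rewrite /rgap => mu_gap.
have := ler_wpM2r (rden_ge0 f) (lam1_min _ mu_eig); lra.
Qed.

End Rayleigh.

Section Colouring.
Variables (R : realType) (V : finType) (E : {set {set V}}) (k : nat) (col : V -> 'I_k).

Definition cind (i : 'I_k) (u : V) : R := (col u == i)%:R.
Definition cdiff (i j : 'I_k) (u : V) : R := cind i u - cind j u.
Definition ccount (e : {set V}) (i : 'I_k) : nat := #|e :&: cclass col i|.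

Lemma sum_cind u : \sum_i cind i u = 1.
Proof.
rewrite (bigD1 (col u)) //= big1 => [|i /negbTE]; first by rewrite /cind eqxx addr0.
by rewrite /cind eq_sym => ->.
Qed.

Lemma cind_sqr i u : cind i u ^+ 2 = cind i u.
Proof. by rewrite /cind; case: (col u == i); rewrite ?expr1n ?expr0n. Qed.

Lemma gfun_cdiff i j : i != j -> gfun R col i j = cdiff i j.
Proof.
move=> ij; apply: boolp.funext => u; rewrite /gfun /cdiff /cind.
case: (eqVneq (col u) i) => [->|_]; first by rewrite (negbTE ij) subr0.
by case: eqP => _; rewrite /= ?mulr0n ?mulr1n sub0r ?oppr0.
Qed.

Lemma edge_sum_cind e i : edge_sum (cind i) e = (ccount e i)%:R.
Proof.
rewrite /ccount (_ : e :&: _ = [set x in e | col x == i]) ?natr_card_sep //.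
by apply/setP => x; rewrite !inE.
Qed.

Lemma edge_sum_cdiff e i j : edge_sum (cdiff i j) e = (ccount e i)%:R - (ccount e j)%:R.
Proof. by rewrite -!edge_sum_cind /edge_sum sumrB. Qed.

Lemma sum_ccount e : \sum_i (ccount e i)%:R = (#|e|)%:R :> R.
Proof.
under eq_bigr do rewrite -edge_sum_cind.
rewrite /edge_sum exchange_big /=; under eq_bigr do rewrite sum_cind.
by rewrite sumr_const; congr _%:R; apply: eq_card => u; rewrite inE.
Qed.

Lemma ccount_le d e i : dproper E d col -> e \in E -> (ccount e i <= d)%N.
Proof.
move=> proper eE; rewrite /ccount (_ : e :&: _ = [set x in e | col x == i]).
  exact: proper.
by apply/setP => x; rewrite !inE.
Qed.

(* Per edge, [sum_sqr_sub] evaluates both parts of [rgap]: the numerator gives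
   [2 k \sum_i a_i^2 - 2 c^2] and the denominator [2 c (k - 1)]. *)
Lemma sum_rgap_cdiff c d lam1 :
  uniform E c -> lam1 * (k%:R - 1) = k%:R * d%:R - c%:R ->
  \sum_i \sum_j rgap E lam1 (cdiff i j) =
  \sum_(e in E) 2 * k%:R * \sum_i (ccount e i)%:R * ((ccount e i)%:R - d%:R).
Proof.
move=> unif lam1E.
under eq_bigr do under eq_bigr do rewrite rgapE.
under eq_bigr do rewrite exchange_big /=.
rewrite exchange_big /=; apply: eq_bigr => e eE.
pose a i : R := (ccount e i)%:R.
have sum_a : \sum_i a i = c%:R by rewrite sum_ccount unif.
transitivity (\sum_i \sum_j (a i - a j) ^+ 2
              - lam1 * \sum_(u in e) \sum_i \sum_j (cind i u - cind j u) ^+ 2).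
  have -> : lam1 * \sum_(u in e) \sum_i \sum_j (cind i u - cind j u) ^+ 2 =
      \sum_i \sum_j lam1 * \sum_(u in e) cdiff i j u ^+ 2.
    rewrite exchange_big /= mulr_sumr; apply: eq_bigr => i _.
    by rewrite exchange_big /= mulr_sumr.
  rewrite -sumrB; apply: eq_bigr => i _; rewrite -sumrB.
  by apply: eq_bigr => j _; rewrite edge_sum_cdiff.
rewrite sum_sqr_sub (eq_bigr _ (fun u _ => sum_sqr_sub (fun i => cind i u))).
under eq_bigr do under eq_bigr do rewrite cind_sqr.
under eq_bigr do rewrite sum_cind.
rewrite sumr_const sum_a -(unif e eE) -mulr_natr.
have -> : \sum_i a i * (a i - d%:R) = \sum_i a i ^+ 2 - d%:R * \sum_i a i.
  by rewrite mulr_sumr -sumrB; apply: eq_bigr => i _; ring.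
rewrite sum_a (unif e eE).
transitivity (2 * k%:R * \sum_i a i ^+ 2 - 2 * c%:R ^+ 2
              - 2 * c%:R * (lam1 * (k%:R - 1))); first by ring.
by rewrite lam1E; ring.
Qed.

End Colouring.

Section ColouringNumber.
Variables (V : finType) (E : {set {set V}}).

Lemma dproper_ge2 c d k (col : V -> 'I_k) :
  (d < c)%N -> uniform E c -> E != set0 -> dproper E d col -> (2 <= k)%N.
Proof.
move=> dc unif /set0Pn[e eE] proper; rewrite leqNgt; apply/negP => k_le1.
have : (0 < #|e|)%N by rewrite (unif e eE); lia.
rewrite card_gt0 => /set0Pn[u ue].
suff e_mono : [set v in e | col v == col u] = e.
  by have := proper e eE (col u); rewrite e_mono (unif e eE); lia.
apply/setP => v; rewrite inE andb_idr // => _; apply/eqP/val_inj => /=.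
by have := ltn_ord (col v); have := ltn_ord (col u); lia.
Qed.

(* An empty colour class could be dropped, giving a [k.-1]-colouring. *)
Lemma is_chi_cclass_nonempty d k (col : V -> 'I_k) :
  is_chi E d k -> dproper E d col -> forall i, exists v, col v = i.
Proof.
move=> [_ chi_min] proper i.
case: (pickP (fun v => col v == i)) => [v /eqP|no_i]; first by exists v.
have col_neq v : col v != i by rewrite no_i.
pose col' v : 'I_k.-1 := Ordinal (unlift_subproof (exist _ (col v) (col_neq v))).
have col_lift v : col v = lift i (col' v).
  by apply: val_inj; rewrite /= unbumpK // inE; apply: col_neq.
exfalso; apply: (chi_min k.-1); first by have := ltn_ord i; lia.
exists col' => e eE j; apply: leq_trans (proper e eE (lift i j)).
apply/subset_leq_card/subsetP => v; rewrite !inE => /andP[-> /eqP <-].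
by apply/eqP; apply: col_lift.
Qed.

End ColouringNumber.

Section EqualityCase.
Variables (R : realType) (V : finType) (E : {set {set V}}).
Variables (c d k : nat) (lam1 : R) (col : V -> 'I_k).
Hypotheses (unif : uniform E c) (proper : dproper E d col) (k_gt0 : (0 < k)%N).
Hypothesis gap_ge0 : forall f, 0 <= rgap E lam1 f.
Hypothesis lam1E : lam1 * (k%:R - 1) = k%:R * d%:R - c%:R.

Let ccount_term_le0 e i : e \in E ->
  (ccount col e i)%:R * ((ccount col e i)%:R - d%:R) <= 0 :> R.
Proof. by move=> eE; rewrite mulr_ge0_le0 // subr_le0 ler_nat (ccount_le _ proper eE). Qed.

(* [sum_rgap_cdiff] equates a sum of nonnegative terms with one of
   nonpositive terms, so all of them vanish. *)
Lemma rgap_cdiff_eq0_cond1 :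
  (forall i j, rgap E lam1 (cdiff R col i j) = 0) /\ cond1 E d col.
Proof.
pose edge_term e : R :=
  2 * k%:R * \sum_i (ccount col e i)%:R * ((ccount col e i)%:R - d%:R).
have edge_le0 e : e \in E -> edge_term e <= 0.
  move=> eE; rewrite pmulr_rle0 ?mulr_gt0 ?ltr0n //.
  by apply: sumr_le0 => i _; apply: ccount_term_le0.
have sum_eq := sum_rgap_cdiff col unif lam1E.
have rows_ge0 i : 0 <= \sum_j rgap E lam1 (cdiff R col i j).
  by apply: sumr_ge0 => j _.
have sum0 : \sum_(e in E) edge_term e = 0.
  by apply/eqP; rewrite eq_le sumr_le0 //= -sum_eq sumr_ge0.
split=> [i j|e eE i].
  have row0 := psumr_eq0P (fun i _ => rows_ge0 i) (etrans sum_eq sum0) isT.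
  exact: (psumr_eq0P (fun j _ => gap_ge0 _) (row0 i) isT).
have /eqP := nsumr_eq0P edge_le0 sum0 eE.
rewrite !mulf_eq0 !pnatr_eq0 (negbTE (lt0n_neq0 k_gt0)) /= => /eqP terms0.
have /eqP := nsumr_eq0P (fun i _ => ccount_term_le0 i eE) terms0 (i := i) isT.
rewrite mulf_eq0 subr_eq0 !pnatr_eq0 eqr_nat /ccount.
by case/orP => /eqP; [left | right].
Qed.

Lemma gfun_eigenfun_lam1 : no_isolated E -> (forall i, exists v, col v = i) ->
  forall i j, i != j -> eigenfun E (gfun R col i j) lam1.
Proof.
move=> noiso classes i j ij; have [v0 cv0] := classes i.
split; first by exists v0; rewrite /gfun cv0 eqxx oner_neq0.
rewrite gfun_cdiff //; apply: eigen_of_rgap_min => //.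
exact: rgap_cdiff_eq0_cond1.1.
Qed.

End EqualityCase.

Section RegularColouring.
Variables (R : realType) (V : finType) (E : {set {set V}}).
Variables (c d k : nat) (col : V -> 'I_k).
Hypotheses (noiso : no_isolated E) (unif : uniform E c) (d_gt0 : (0 < d)%N).
Hypothesis c1 : cond1 E d col.

Definition nmeet (j : 'I_k) (v : V) : nat :=
  #|[set e in E | (v \in e) && (e :&: cclass col j != set0)]|.

Lemma ccount_cond1 e j :
  e \in E -> (ccount col e j)%:R = d%:R * (e :&: cclass col j != set0)%:R :> R.
Proof.
rewrite /ccount => eE; have [-> | ne] := eqVneq (e :&: cclass col j) set0.
  by rewrite cards0 mulr0.
by case: (c1 eE j) => [/eqP|->]; rewrite ?mulr1 // cards_eq0 (negbTE ne).
Qed.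

Lemma natr_nmeet j v :
  (nmeet j v)%:R = \sum_(e in E) (v \in e)%:R * (e :&: cclass col j != set0)%:R :> R.
Proof. by rewrite natr_card_sep; apply: eq_bigr => e _; rewrite -natrM mulnb. Qed.

Lemma deglap_cdiff i j v :
  deglap E (cdiff R col i j) v = d%:R * ((nmeet i v)%:R - (nmeet j v)%:R).
Proof.
rewrite /deglap !natr_nmeet -sumrB mulr_sumr; apply: eq_bigr => e eE.
by rewrite edge_sum_cdiff !ccount_cond1 //; ring.
Qed.

Lemma nmeet_col v : nmeet (col v) v = hdeg E v.
Proof.
apply: eq_card => e; rewrite !inE; case: (e \in E) (boolP (v \in e)) => [] [] //= ve.
by apply/set0Pn; exists v; rewrite !inE ve eqxx.
Qed.

(* Under (1) every edge at [v] meets exactly [c / d] colour classes. *)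
Lemma sum_nmeet v : d%:R * \sum_j (nmeet j v)%:R = c%:R * hdegr R E v :> R.
Proof.
under eq_bigr do rewrite natr_nmeet.
rewrite exchange_big /= mulr_sumr hdegrE mulr_sumr; apply: eq_bigr => e eE.
rewrite -mulr_sumr mulrCA [RHS]mulrC -(unif eE) -(sum_ccount R col) mulr_sumr.
by congr (_ * _); apply: eq_bigr => j _; rewrite ccount_cond1.
Qed.

Lemma natr_subr1_neq0 (i j : 'I_k) : i != j -> (k%:R - 1 : R) != 0.
Proof.
move=> ij; rewrite subr_eq0 pnatr_eq1; apply: contraNneq ij => k1.
by apply/eqP/val_inj => /=; have := ltn_ord i; have := ltn_ord j; lia.
Qed.

Lemma hlap_gfun i j v : i != j ->
  hlap E (gfun R col i j) v = (hdegr R E v)^-1 * (d%:R * ((nmeet i v)%:R - (nmeet j v)%:R)).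
Proof. by move=> ij; rewrite gfun_cdiff // hlapE // deglap_cdiff. Qed.

(* [L g_{jj'} v = 0] says [nmeet j v = nmeet j' v]; with [sum_nmeet] this pins
   down the common value. *)
Lemma cond3_of_hlap_gfun :
  (forall i j, i != j -> forall v, col v != i -> col v != j -> hlap E (gfun R col i j) v = 0) ->
  cond3 E R c d col.
Proof.
move=> harmonic i j ij v; rewrite inE => /eqP cv.
have k1 := natr_subr1_neq0 ij; have dn : d%:R != 0 :> R by rewrite pnatr_eq0 -lt0n.
set m : R := (nmeet j v)%:R.
have nmeet_eq j' : j' != i -> (nmeet j' v)%:R = m.
  move=> j'i; have [<- // | jj'] := eqVneq j j'.
  have := harmonic j j' jj' v; rewrite cv ij eq_sym j'i => /(_ isT isT).
  rewrite hlap_gfun // => /eqP; rewrite !mulf_eq0 invr_eq0 (negbTE dn) /=.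
  by rewrite (negbTE (hdegr_neq0 R noiso v)) subr_eq0 => /eqP.
have := sum_nmeet v; rewrite (bigD1 i) //= -cv nmeet_col cv -/(hdegr R E v).
rewrite (eq_bigr (fun=> m)) => [|j' /nmeet_eq //].
have sum_all : \sum_(j' < k) m = k%:R * m by rewrite sumr_const card_ord mulr_natl.
rewrite (bigD1 i) //= in sum_all.
have -> : \sum_(j' | j' != i) m = k%:R * m - m by lra.
move=> sum_v; apply: (mulfI dn); apply: (mulIf k1).
have -> : d%:R * (hdegr R E v * ((c%:R / d%:R - 1) / (k%:R - 1))) * (k%:R - 1) =
    hdegr R E v * (c%:R - d%:R) by field; rewrite k1 dn.
lra.
Qed.

Lemma cond3_of_gfun_eigen :
  (forall i j, i != j -> exists mu, eigenfun E (gfun R col i j) mu) -> cond3 E R c d col.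
Proof.
move=> eig; apply: cond3_of_hlap_gfun => i j ij v ci cj.
have [mu [_ ->]] := eig i j ij.
by rewrite /gfun (negbTE ci) (negbTE cj) mulr0.
Qed.

Lemma gfun_eigen_of_cond3 : (forall i, exists v, col v = i) -> cond3 E R c d col ->
  forall i j, i != j -> eigenfun E (gfun R col i j) ((d%:R * k%:R - c%:R) / (k%:R - 1)).
Proof.
move=> classes c3 i j ij; have [v0 cv0] := classes i.
have k1 := natr_subr1_neq0 ij; have dn : d%:R != 0 :> R by rewrite pnatr_eq0 -lt0n.
split=> [|v]; first by exists v0; rewrite /gfun cv0 eqxx oner_neq0.
have gn := hdegr_neq0 R noiso v.
rewrite hlap_gfun //.
have nmeet_other a b : a != b -> col v = a ->
    (nmeet b v)%:R = hdegr R E v * ((c%:R / d%:R - 1) / (k%:R - 1)).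
  by move=> ab ca; have := c3 a b ab v; rewrite inE ca eqxx; apply.
rewrite /gfun; case: (eqVneq (col v) i) => [ci|ci].
  rewrite -ci nmeet_col (nmeet_other i j ij ci) -/(hdegr R E v).
  by field; rewrite k1 dn gn.
case: (eqVneq (col v) j) => [cj|cj].
  rewrite -cj nmeet_col (nmeet_other j i _ cj) 1?eq_sym // -/(hdegr R E v).
  by field; rewrite k1 dn gn.
by rewrite (nmeet_other _ i ci erefl) (nmeet_other _ j cj erefl) subrr !mulr0.
Qed.

End RegularColouring.

Lemma mulrB1_of_ratio_eq (R : fieldType) (k c d l : R) :
  k != 0 -> k = (c - l) / (d - l) -> l * (k - 1) = k * d - c.
Proof.
move=> k0 kE; have dl : d - l != 0 by apply: contraNneq k0 => dl; rewrite kE dl invr0 mulr0.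
have kdl : k * (d - l) = c - l by rewrite kE divfK.
transitivity (k * d - c + (c - l - k * (d - l))); first by ring.
by rewrite kdl subrr addr0.
Qed.

Theorem mainTheorem8 (R : realType) (V : finType) (E : {set {set V}})
    (c d chi : nat) (lam1 : R) :
  (2 <= c)%N -> (1 <= d)%N -> (d <= c - 1)%N ->
  uniform E c -> E != set0 -> no_isolated E ->
  smallest_eigval E lam1 -> is_chi E d chi ->
  (* main part, under the equality hypothesis *)
  (chi%:R = (c%:R - lam1) / (d%:R - lam1) ->
   forall col : V -> 'I_chi, dproper E d col ->
     [/\ cond1 E d col,
         (forall i j : 'I_chi, i != j ->
            eigenfun E (gfun R col i j) lam1 /\
            lam1 = (d%:R * chi%:R - c%:R) / (chi%:R - 1))
       & cond3 E R c d col])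
  /\
  (* "moreover" part, without the equality hypothesis *)
  (forall col : V -> 'I_chi, dproper E d col -> cond1 E d col ->
     ((forall i j : 'I_chi, i != j -> exists mu, eigenfun E (gfun R col i j) mu)
        <-> cond3 E R c d col)
     /\
     ((forall i j : 'I_chi, i != j -> exists mu, eigenfun E (gfun R col i j) mu) ->
        forall i j : 'I_chi, i != j ->
          eigenfun E (gfun R col i j) ((d%:R * chi%:R - c%:R) / (chi%:R - 1)))).
Proof.
move=> c_ge2 d_gt0 d_le unif E_neq0 noiso lam1_min chi_d.
have classes col := is_chi_cclass_nonempty (col := col) chi_d.
have eig_of_cond3 (col : V -> 'I_chi) : dproper E d col -> cond1 E d col ->
    cond3 E R c d col -> forall i j, i != j ->
    eigenfun E (gfun R col i j) ((d%:R * chi%:R - c%:R) / (chi%:R - 1)).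
  by move=> proper c1; apply: (gfun_eigen_of_cond3 noiso d_gt0 c1 (classes col proper)).
split=> [chiE col proper | col proper c1]; last first.
  split=> [|eig]; last by apply: eig_of_cond3 => //; apply: cond3_of_gfun_eigen.
  by split=> [|c3 i j ij]; [apply: cond3_of_gfun_eigen | eexists; apply: eig_of_cond3].
have chi_ge2 : (2 <= chi)%N by apply: dproper_ge2 unif E_neq0 proper; lia.
have chi1 : chi%:R - 1 != 0 :> R by rewrite subr_eq0 pnatr_eq1; lia.
have lam1E : lam1 * (chi%:R - 1) = chi%:R * d%:R - c%:R.
  by apply: mulrB1_of_ratio_eq chiE; rewrite pnatr_eq0; lia.
have gap_ge0 f := rgap_smallest_eigval_ge0 noiso f lam1_min.
have [_ c1] := rgap_cdiff_eq0_cond1 unif proper (ltnW chi_ge2) gap_ge0 lam1E.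
have eig := gfun_eigenfun_lam1 unif proper (ltnW chi_ge2) gap_ge0 lam1E noiso
  (classes _ proper).
have lam1_val : lam1 = (d%:R * chi%:R - c%:R) / (chi%:R - 1).
  by rewrite [d%:R * _]mulrC -lam1E mulfK.
split=> //; first by move=> i j ij; split=> //; apply: eig.
by apply: cond3_of_gfun_eigen => // i j ij; exists lam1; apply: eig.
Qed.
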